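(* Let $(\mathscr F,\Gamma),(\mathscr G,\Lambda)\colon(\mathcal C,\mathbb E,\mathfrak s)\to(\mathcal D,\mathbb F,\mathfrak t)$ be $n$-exangulated functors and $\beth\colon(\mathscr F,\Gamma)\Rightarrow(\mathscr G,\Lambda)$ an $n$-exangulated natural transformation. Then $$\widetilde{\langle\beth\rangle}\circ_h\mathrm{id}_{\mathsf{Shin}_{(\mathcal C,\mathbb E)}}=\mathrm{id}_{\mathsf{Shin}_{(\mathcal D,\mathbb F)}}\circ_h\langle\widetilde\beth\rangle$$ as natural transformations from $\widetilde{\mathsf E_{(\mathscr F,\Gamma)}}\circ\mathsf{Shin}_{(\mathcal C,\mathbb E)}=\mathsf{Shin}_{(\mathcal D,\mathbb F)}\circ\mathsf E_{(\widetilde{\mathscr F},\widetilde\Gamma)}$ to $\widetilde{\mathsf E_{(\mathscr G,\Lambda)}}\circ\mathsf{Shin}_{(\mathcal C,\mathbb E)}=\mathsf{Shin}_{(\mathcal D,\mathbb F)}\circ\mathsf E_{(\widetilde{\mathscr G},\widetilde\Lambda)}$ (functors $\widetilde{\mathbb E}\text{-}\mathrm{Ext}(\widetilde{\mathcal C})\to\widetilde{\mathbb F\text{-}\mathrm{Ext}(\mathcal D)}$).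
   Context: $n\ge1$; $n$-exangulated categories in the sense of Herschend–Liu–Nakaoka. $a_*\alpha=\mathbb E(C,a)(\alpha)$, $c^*\alpha=\mathbb E(c,A)(\alpha)$. $n$-exangulated functor $(\mathscr F,\Gamma)$: additive $\mathscr F$ with natural $\Gamma\colon\mathbb E(-,-)\Rightarrow\mathbb F(\mathscr F-,\mathscr F-)$ sending realisations to realisations ($\mathfrak s(\alpha)=[X_\bullet]\Rightarrow\mathfrak t(\Gamma\alpha)=[\mathscr FX_\bullet]$). $n$-exangulated natural transformation: natural $\beth\colon\mathscr F\Rightarrow\mathscr G$ with $(\beth_A)_*\Gamma(\alpha)=(\beth_C)^*\Lambda(\alpha)$ for all $\alpha\in\mathbb E(C,A)$. $\mathbb E\text{-}\mathrm{Ext}(\mathcal C)$: objects $\alpha\in\mathbb E(C,A)$; morphisms $(a,c)\colon\alpha\to\beta\in\mathbb E(D,B)$ with $a_*\alpha=c^*\beta$. $\mathsf E_{(\mathscr F,\Gamma)}\colon\alpha\mapsto\Gamma(\alpha)$, $(a,c)\mapsto(\mathscr Fa,\mathscr Fc)$; $\langle\beth\rangle\colon\mathsf E_{(\mathscr F,\Gamma)}\Rightarrow\mathsf E_{(\mathscr G,\Lambda)}$ has components $\langle\beth\rangle_\alpha=(\beth_A,\beth_C)$. Idempotent completion $\widetilde{\mathcal A}$: objects $(X,e)$, morphisms $(e_Y,f,e_X)$ with $fe_X=f=e_Yf$, composition $(e_Z,g,e_Y)(e_Y,f,e_X)=(e_Z,gf,e_X)$; for an additive functor $\mathscr H$, $\widetilde{\mathscr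 H}(X,e)=(\mathscr HX,\mathscr He)$, $\widetilde{\mathscr H}(e_Y,f,e_X)=(\mathscr He_Y,\mathscr Hf,\mathscr He_X)$; for a natural transformation $\theta\colon\mathscr H\Rightarrow\mathscr K$, $\widetilde\theta_{(X,e)}=(\mathscr Ke,(\mathscr Ke)\theta_X(\mathscr He),\mathscr He)$. $\widetilde{\mathbb E}((C,e_C),(A,e_A))=\{(e_A,\alpha,e_C)\mid(e_A)_*\alpha=\alpha=(e_C)^*\alpha\}$, with $\widetilde{\mathbb E}((e_C,d,e_D),(e_B,a,e_A))(e_A,\alpha,e_C)=(e_B,\mathbb E(d,a)\alpha,e_D)$; $\widetilde\Gamma(e_A,\alpha,e_C)=(\mathscr Fe_A,\Gamma(\alpha),\mathscr Fe_C)$; the $n$-exangulated structure $(\widetilde{\mathcal C},\widetilde{\mathbb E},\widetilde{\mathfrak s})$ is that of Klapproth–Msapato–Shah. $\mathsf{Shin}_{(\mathcal C,\mathbb E)}\colon\widetilde{\mathbb E}\text{-}\mathrm{Ext}(\widetilde{\mathcal C})\to\widetilde{\mathbb E\text{-}\mathrm{Ext}(\mathcal C)}$ is $(e_A,\alpha,e_C)\mapsto(\alpha,(e_A,e_C))$, $((e_B,a,e_A),(e_D,c,e_C))\mapsto((e_B,e_D),(a,c),(e_A,e_C))$. Horizontal composition: $(\daleth\circ_h\theta)_X=\daleth_{\mathscr KX}\circ\mathscr L(\theta_X)$ for $\theta\colon\mathscr H\Rightarrow\mathscr K$, $\daleth\colon\mathscr L\Rightarrow\mathscr M$. *)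

From HB Require Import structures.
From mathcomp Require Import all_boot all_algebra.
Set Implicit Arguments. Unset Strict Implicit. Unset Printing Implicit Defensive.
From Stdlib Require Import ProofIrrelevance.
Import GRing.Theory.


Record Cat := {
  Ob : Type;
  Hom : Ob -> Ob -> Type;
  idm : forall X, Hom X X;
  cmp : forall X Y Z, Hom Y Z -> Hom X Y -> Hom X Z;
  cmpA : forall W X Y Z (h : Hom Y Z) (g : Hom X Y) (f : Hom W X),
             (cmp h (cmp g f) = cmp (cmp h g) f);
  cmp1l : forall X Y (f : Hom X Y), (cmp (idm Y) f = f);
  cmp1r : forall X Y (f : Hom X Y), (cmp f (idm X) = f) }.
Arguments idm {c} X.
Arguments cmp {c X Y Z}.
Arguments Hom {c}.

Record Functor (K L : Cat) := {
  fob : Ob K -> Ob L;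
  fmor : forall X Y, Hom X Y -> Hom (fob X) (fob Y);
  fid : forall X, (fmor (idm X) = idm (fob X));
  fcmp : forall X Y Z (g : Hom Y Z) (f : Hom X Y),
             (fmor (cmp g f) = cmp (fmor g) (fmor f)) }.
Arguments fmor {K L} f {X Y} : rename.

Definition compF (A B C : Cat) (L : Functor B C) (H : Functor A B) : Functor A C.
Proof.
refine {| fob := fun X => fob L (fob H X);
          fmor := fun X Y f => fmor L (fmor H f) |}.
- move=> X; have l := fid L (fob H X); have h := fid H X.
  by rewrite h l.
- move=> X Y Z g f; have h := fcmp H g f.
  have l := fcmp L (fmor H g) (fmor H f); by rewrite h l.
Defined.

Record NatTrans (K L : Cat) (H M : Functor K L) := {
  ntc : forall X, Hom (fob H X) (fob M X) }.
Arguments ntc {K L H M}.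

Definition idNT (K L : Cat) (H : Functor K L) : NatTrans H H :=
  {| ntc := fun X => idm (fob H X) |}.

Definition hcomp (A B C : Cat) (H K : Functor A B) (L M : Functor B C)
  (d : NatTrans L M) (t : NatTrans H K) : NatTrans (compF L H) (compF M K) :=
  @Build_NatTrans _ _ (compF L H) (compF M K)
    (fun X => cmp (ntc d (fob K X)) (fmor L (ntc t X))).

Record TOb (K : Cat) := {
  tob : Ob K;
  tid : Hom tob tob;
  tidem : (cmp tid tid = tid) }.
Arguments tob {K}. Arguments tid {K}.

Record THom (K : Cat) (P Q : TOb K) := {
  tmor : Hom (tob P) (tob Q);
  tcond : (cmp tmor (tid P) = tmor /\ cmp (tid Q) tmor = tmor) }.
Arguments tmor {K P Q}.

Lemma THom_eq (K : Cat) (P Q : TOb K) (f g : THom P Q) : tmor f = tmor g -> f = g.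
Proof. destruct f as [f pf], g as [g pg]; simpl; intros e; subst g; f_equal; apply: proof_irrelevance. Qed.

Definition tId (K : Cat) (P : TOb K) : THom P P.
Proof.
refine {| tmor := tid P |}. by have h := tidem P; rewrite h.
Defined.

Definition tCmp (K : Cat) (P Q R : TOb K) (g : THom Q R) (f : THom P Q) : THom P R.
Proof.
refine {| tmor := cmp (tmor g) (tmor f) |}.
have a1 := cmpA (tmor g) (tmor f) (tid P).
have a2 := cmpA (tid R) (tmor g) (tmor f).
have [g1 g2] := tcond g; have [f1 f2] := tcond f.
by split; [rewrite -a1 f1 | rewrite a2 g2].
Defined.

Definition tildeCat (K : Cat) : Cat.
Proof.
refine {| Ob := TOb K; Hom := @THom K; idm := @tId K; cmp := @tCmp K |}.
- move=> W X Y Z h g f; have a := cmpA (tmor h) (tmor g) (tmor f).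
  by apply: THom_eq => /=.
- move=> X Y f; have [f1 f2] := tcond f; by apply: THom_eq.
- move=> X Y f; have [f1 f2] := tcond f; by apply: THom_eq.
Defined.

Definition tildeFob (K L : Cat) (H : Functor K L) (P : TOb K) : TOb L.
Proof.
refine {| tob := fob H (tob P); tid := fmor H (tid P) |}.
have h := fcmp H (tid P) (tid P); have e := tidem P.
by rewrite -h e.
Defined.

Definition tildeFmor (K L : Cat) (H : Functor K L) (P Q : TOb K) (f : THom P Q) :
  THom (tildeFob H P) (tildeFob H Q).
Proof.
refine (@Build_THom L (tildeFob H P) (tildeFob H Q) (fmor H (tmor f)) _).
have h1 := fcmp H (tmor f) (tid P); have h2 := fcmp H (tid Q) (tmor f).
have [f1 f2] := tcond f. by rewrite /= -h1 -h2 f1 f2.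
Defined.

Definition tildeFun (K L : Cat) (H : Functor K L) : Functor (tildeCat K) (tildeCat L).
Proof.
refine (@Build_Functor (tildeCat K) (tildeCat L) (tildeFob H) (@tildeFmor K L H) _ _).
- by move=> X; apply: THom_eq.
- move=> X Y Z g f; have h := fcmp H (tmor g) (tmor f).
  by apply: THom_eq => /=.
Defined.

Definition tildeNT (K L : Cat) (H M : Functor K L) (t : NatTrans H M) :
  NatTrans (tildeFun H) (tildeFun M).
Proof.
unshelve refine (@Build_NatTrans (tildeCat K) (tildeCat L) (tildeFun H) (tildeFun M) (fun P : TOb K =>
  @Build_THom L (tildeFob H P) (tildeFob M P)
     (cmp (fmor M (tid P)) (cmp (ntc t (tob P)) (fmor H (tid P)))) _)).
have h := fcmp H (tid P) (tid P); have m := fcmp M (tid P) (tid P).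
have e := tidem P.
have a1 := cmpA (fmor M (tid P)) (cmp (ntc t (tob P)) (fmor H (tid P))) (fmor H (tid P)).
have a2 := cmpA (ntc t (tob P)) (fmor H (tid P)) (fmor H (tid P)).
have a3 := cmpA (fmor M (tid P)) (fmor M (tid P)) (cmp (ntc t (tob P)) (fmor H (tid P))).
split => /=.
- by rewrite -a1 -a2 -h e.
- by rewrite a3 -m e.
Defined.

(* gEv C A = E(C,A);  gpush a = a_* ;  gpull c = c^*  *)
Record BiF (K : Cat) := {
  gEv : Ob K -> Ob K -> Type;
  gpush : forall C A B, Hom A B -> gEv C A -> gEv C B;
  gpull : forall C D A, Hom D C -> gEv C A -> gEv D A;
  gpush_id : forall C A (x : gEv C A), (gpush (idm A) x = x);
  gpull_id : forall C A (x : gEv C A), (gpull (idm C) x = x);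
  gpush_cmp : forall C A B B' (b : Hom B B') (a : Hom A B) (x : gEv C A),
      (gpush (cmp b a) x = gpush b (gpush a x));
  gpull_cmp : forall C D D' A (c : Hom D C) (d : Hom D' D) (x : gEv C A),
      (gpull (cmp c d) x = gpull d (gpull c x));
  gpush_pull : forall C D A B (a : Hom A B) (c : Hom D C) (x : gEv C A),
      (gpush a (gpull c x) = gpull c (gpush a x)) }.
Arguments gEv {K}.
Arguments gpush {K} E {C A B} : rename.
Arguments gpull {K} E {C D A} : rename.

Record ExtOb (K : Cat) (E : BiF K) := { eC : Ob K; eA : Ob K; eal : gEv E eC eA }.
Arguments eC {K E}. Arguments eA {K E}. Arguments eal {K E}.

Record ExtHom (K : Cat) (E : BiF K) (x y : ExtOb E) := {
  ha : Hom (eA x) (eA y);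
  hc : Hom (eC x) (eC y);
  hpf : (gpush E ha (eal x) = gpull E hc (eal y)) }.
Arguments ha {K E x y}. Arguments hc {K E x y}.

Lemma ExtHom_eq (K : Cat) (E : BiF K) (x y : ExtOb E) (f g : ExtHom x y) :
  ha f = ha g -> hc f = hc g -> f = g.
Proof. destruct f as [a c p], g as [a' c' p']; simpl; intros e1 e2; subst; f_equal; apply: proof_irrelevance. Qed.

Definition extId (K : Cat) (E : BiF K) (x : ExtOb E) : ExtHom x x.
Proof.
refine {| ha := idm (eA x); hc := idm (eC x) |}.
have h1 := gpush_id (eal x); have h2 := gpull_id (eal x).
by rewrite h1 h2.
Defined.

Definition extCmp (K : Cat) (E : BiF K) (x y z : ExtOb E) (g : ExtHom y z) (f : ExtHom x y) :
  ExtHom x z.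
Proof.
refine {| ha := cmp (ha g) (ha f); hc := cmp (hc g) (hc f) |}.
have h1 := gpush_cmp (ha g) (ha f) (eal x).
have h2 := gpull_cmp (hc g) (hc f) (eal z).
have h3 := gpush_pull (ha g) (hc f) (eal y).
have pf := hpf f; have pg := hpf g.
by rewrite h1 h2 pf h3 pg.
Defined.

Definition ExtCat (K : Cat) (E : BiF K) : Cat.
Proof.
refine {| Ob := ExtOb E; Hom := @ExtHom K E; idm := @extId K E; cmp := @extCmp K E |}.
- move=> W X Y Z h g f; have a1 := cmpA (ha h) (ha g) (ha f).
  have a2 := cmpA (hc h) (hc g) (hc f). by apply: ExtHom_eq.
- move=> X Y f; have a1 := cmp1l (ha f); have a2 := cmp1l (hc f).
  by apply: ExtHom_eq.
- move=> X Y f; have a1 := cmp1r (ha f); have a2 := cmp1r (hc f).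
  by apply: ExtHom_eq.
Defined.

Record TEv (K : Cat) (E : BiF K) (P Q : TOb K) := {
  tev : gEv E (tob P) (tob Q);
  tevpf : (gpush E (tid Q) tev = tev /\ gpull E (tid P) tev = tev) }.
Arguments tev {K E P Q}.

Lemma TEv_eq (K : Cat) (E : BiF K) (P Q : TOb K) (x y : TEv E P Q) : tev x = tev y -> x = y.
Proof. destruct x as [x p], y as [y p']; simpl; intros e; subst; f_equal; apply: proof_irrelevance. Qed.

Definition tpush (K : Cat) (E : BiF K) (P Q Q' : TOb K) (a : THom Q Q') (x : TEv E P Q) :
  TEv E P Q'.
Proof.
refine {| tev := gpush E (tmor a) (tev x) |}.
have [a1 a2] := tcond a; have [x1 x2] := tevpf x.
have h1 := gpush_cmp (tid Q') (tmor a) (tev x).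
have h2 := gpush_pull (tmor a) (tid P) (tev x).
by split; rewrite -?h1 ?a2 // -h2 x2.
Defined.

Definition tpull (K : Cat) (E : BiF K) (P P' Q : TOb K) (c : THom P' P) (x : TEv E P Q) :
  TEv E P' Q.
Proof.
refine {| tev := gpull E (tmor c) (tev x) |}.
have [c1 c2] := tcond c; have [x1 x2] := tevpf x.
have h1 := gpull_cmp (tmor c) (tid P') (tev x).
have h2 := gpush_pull (tid Q) (tmor c) (tev x).
by split; rewrite -?h1 ?c1 // h2 x1.
Defined.

Definition tildeBiF (K : Cat) (E : BiF K) : BiF (tildeCat K).
Proof.
refine (@Build_BiF (tildeCat K) (@TEv K E) (@tpush K E) (@tpull K E) _ _ _ _ _).
- move=> C A x; have [x1 x2] := tevpf x. by apply: TEv_eq.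
- move=> C A x; have [x1 x2] := tevpf x. by apply: TEv_eq.
- move=> C A B B' b a x; have h := gpush_cmp (tmor b) (tmor a) (tev x).
  by apply: TEv_eq.
- move=> C D D' A c d x; have h := gpull_cmp (tmor c) (tmor d) (tev x).
  by apply: TEv_eq.
- move=> C D A B a c x; have h := gpush_pull (tmor a) (tmor c) (tev x).
  by apply: TEv_eq.
Defined.

Record BiFMor (K L : Cat) (E : BiF K) (E' : BiF L) := {
  bH : Functor K L;
  bg : forall C A, gEv E C A -> gEv E' (fob bH C) (fob bH A);
  bg_push : forall C A B (a : Hom A B) (x : gEv E C A),
      (bg (gpush E a x) = gpush E' (fmor bH a) (bg x));
  bg_pull : forall C D A (c : Hom D C) (x : gEv E C A),
      (bg (gpull E c x) = gpull E' (fmor bH c) (bg x)) }.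
Arguments bH {K L E E'}. Arguments bg {K L E E'} _ {C A}.

Definition extFob (K L : Cat) (E : BiF K) (E' : BiF L) (M : BiFMor E E') (x : ExtOb E) :
  ExtOb E' := {| eC := fob (bH M) (eC x); eA := fob (bH M) (eA x); eal := bg M (eal x) |}.

Definition extFmor (K L : Cat) (E : BiF K) (E' : BiF L) (M : BiFMor E E') (x y : ExtOb E)
  (f : ExtHom x y) : ExtHom (extFob M x) (extFob M y).
Proof.
refine (@Build_ExtHom L E' (extFob M x) (extFob M y) (fmor (bH M) (ha f)) (fmor (bH M) (hc f)) _).
have p := hpf f; have h1 := bg_push M (ha f) (eal x).
have h2 := bg_pull M (hc f) (eal y).
by rewrite /= -h1 -h2 p.
Defined.

Definition ExtFun (K L : Cat) (E : BiF K) (E' : BiF L) (M : BiFMor E E') :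
  Functor (ExtCat E) (ExtCat E').
Proof.
refine (@Build_Functor (ExtCat E) (ExtCat E') (extFob M) (@extFmor K L E E' M) _ _).
- move=> x; have h1 := fid (bH M) (eA x); have h2 := fid (bH M) (eC x).
  by apply: ExtHom_eq.
- move=> x y z g f; have h1 := fcmp (bH M) (ha g) (ha f).
  have h2 := fcmp (bH M) (hc g) (hc f).
  by apply: ExtHom_eq.
Defined.

Definition tildeBg (K L : Cat) (E : BiF K) (E' : BiF L) (M : BiFMor E E') (P Q : TOb K)
  (x : TEv E P Q) : TEv E' (tildeFob (bH M) P) (tildeFob (bH M) Q).
Proof.
refine (@Build_TEv L E' (tildeFob (bH M) P) (tildeFob (bH M) Q) (bg M (tev x)) _).
have [x1 x2] := tevpf x.
have h1 := bg_push M (tid Q) (tev x); have h2 := bg_pull M (tid P) (tev x).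
by rewrite /= -h1 -h2 x1 x2.
Defined.

Definition tildeMor (K L : Cat) (E : BiF K) (E' : BiF L) (M : BiFMor E E') :
  BiFMor (tildeBiF E) (tildeBiF E').
Proof.
refine (@Build_BiFMor (tildeCat K) (tildeCat L) (tildeBiF E) (tildeBiF E')
          (tildeFun (bH M)) (@tildeBg K L E E' M) _ _).
- move=> C A B a x; have h := bg_push M (tmor a) (tev x).
  by apply: TEv_eq.
- move=> C D A c x; have h := bg_pull M (tmor c) (tev x).
  by apply: TEv_eq.
Defined.

Definition genBracket (K L : Cat) (E : BiF K) (E' : BiF L) (M1 M2 : BiFMor E E')
  (t : NatTrans (bH M1) (bH M2))
  (pf : forall C A (x : gEv E C A),
          (gpush E' (ntc t A) (bg M1 x) = gpull E' (ntc t C) (bg M2 x))) :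
  NatTrans (ExtFun M1) (ExtFun M2) :=
  @Build_NatTrans (ExtCat E) (ExtCat E') (ExtFun M1) (ExtFun M2) (fun x =>
    @Build_ExtHom L E' (extFob M1 x) (extFob M2 x) (ntc t (eA x)) (ntc t (eC x))
      (pf _ _ (eal x))).

Definition shinFob (K : Cat) (E : BiF K) (x : ExtOb (tildeBiF E)) : TOb (ExtCat E).
Proof.
pose y := {| eC := tob (eC x); eA := tob (eA x); eal := tev (eal x) |}.
unshelve refine (@Build_TOb (ExtCat E) y (@Build_ExtHom K E y y (tid (eA x)) (tid (eC x)) _) _).
- have [h1 h2] := tevpf (eal x). by rewrite /= h1 h2.
- have h1 := tidem (eA x); have h2 := tidem (eC x).
  by apply: ExtHom_eq.
Defined.

Definition shinFmor (K : Cat) (E : BiF K) (x y : ExtOb (tildeBiF E)) (f : ExtHom x y) :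
  THom (shinFob x) (shinFob y).
Proof.
unshelve refine (@Build_THom (ExtCat E) (shinFob x) (shinFob y)
   (@Build_ExtHom K E (tob (shinFob x)) (tob (shinFob y)) (tmor (ha f)) (tmor (hc f)) _) _).
- have p := hpf f. by move: (f_equal (@tev _ _ _ _) p).
- have [a1 a2] := tcond (ha f); have [c1 c2] := tcond (hc f).
  by split; apply: ExtHom_eq.
Defined.

Definition Shin (K : Cat) (E : BiF K) :
  Functor (ExtCat (tildeBiF E)) (tildeCat (ExtCat E)).
Proof.
refine (@Build_Functor (ExtCat (tildeBiF E)) (tildeCat (ExtCat E)) (@shinFob K E)
          (@shinFmor K E) _ _).
- by move=> x; apply: THom_eq; apply: ExtHom_eq.
- by move=> x y z g f; apply: THom_eq; apply: ExtHom_eq.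
Defined.

Record PreAdd := {
  aOb : Type;
  aHom : aOb -> aOb -> zmodType;
  aid : forall X, aHom X X;
  acmp : forall X Y Z, aHom Y Z -> aHom X Y -> aHom X Z;
  acmpA : forall W X Y Z (h : aHom Y Z) (g : aHom X Y) (f : aHom W X),
      acmp h (acmp g f) = acmp (acmp h g) f;
  acmp1l : forall X Y (f : aHom X Y), acmp (aid Y) f = f;
  acmp1r : forall X Y (f : aHom X Y), acmp f (aid X) = f;
  acmpDl : forall X Y Z (g g' : aHom Y Z) (f : aHom X Y),
      acmp (g + g')%R f = (acmp g f + acmp g' f)%R;
  acmpDr : forall X Y Z (g : aHom Y Z) (f f' : aHom X Y),
      acmp g (f + f')%R = (acmp g f + acmp g f')%R }.
Arguments aHom {p}. Arguments aid {p} X. Arguments acmp {p X Y Z}.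

Record BPdata (C : PreAdd) (X Y P : aOb C) := {
  bi1 : aHom X P; bi2 : aHom Y P; bp1 : aHom P X; bp2 : aHom P Y;
  bp11 : acmp bp1 bi1 = aid X;
  bp22 : acmp bp2 bi2 = aid Y;
  bp12 : acmp bp1 bi2 = 0%R;
  bp21 : acmp bp2 bi1 = 0%R;
  bpsum : (acmp bi1 bp1 + acmp bi2 bp2)%R = aid P }.
Arguments bi1 {C X Y P}. Arguments bi2 {C X Y P}.
Arguments bp1 {C X Y P}. Arguments bp2 {C X Y P}.

Record AddCat := {
  apre :> PreAdd;
  azero : aOb apre;
  azeroI : forall X (f g : aHom azero X), f = g;
  azeroT : forall X (f g : aHom X azero), f = g;
  abip : forall X Y : aOb apre, exists P, inhabited (BPdata X Y P) }.

(* biadditive functor E : C^op x C -> Ab;  Ev C A = E(C,A),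
   push a = a_* = E(C,a),  pull c = c^* = E(c,A) *)
Record BiAdd (C : PreAdd) := {
  Ev : aOb C -> aOb C -> zmodType;
  push : forall Cc A B, aHom A B -> Ev Cc A -> Ev Cc B;
  pull : forall Cc D A, aHom D Cc -> Ev Cc A -> Ev D A;
  push_id : forall Cc A (x : Ev Cc A), push (aid A) x = x;
  pull_id : forall Cc A (x : Ev Cc A), pull (aid Cc) x = x;
  push_cmp : forall Cc A B B' (b : aHom B B') (a : aHom A B) (x : Ev Cc A),
      push (acmp b a) x = push b (push a x);
  pull_cmp : forall Cc D D' A (c : aHom D Cc) (d : aHom D' D) (x : Ev Cc A),
      pull (acmp c d) x = pull d (pull c x);
  push_pull : forall Cc D A B (a : aHom A B) (c : aHom D Cc) (x : Ev Cc A),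
      push a (pull c x) = pull c (push a x);
  pushD : forall Cc A B (a : aHom A B) (x y : Ev Cc A), push a (x + y)%R = (push a x + push a y)%R;
  pullD : forall Cc D A (c : aHom D Cc) (x y : Ev Cc A), pull c (x + y)%R = (pull c x + pull c y)%R;
  pushDm : forall Cc A B (a a' : aHom A B) (x : Ev Cc A), push (a + a')%R x = (push a x + push a' x)%R;
  pullDm : forall Cc D A (c c' : aHom D Cc) (x : Ev Cc A), pull (c + c')%R x = (pull c x + pull c' x)%R }.
Arguments Ev {C}.
Arguments push {C} b {Cc A B} : rename.
Arguments pull {C} b {Cc D A} : rename.

Section Complexes.
Variables (C : PreAdd) (n : nat).

Record Cplx (A Z : aOb C) := {
  cob : nat -> aOb C;
  cd : forall i, aHom (cob i) (cob i.+1);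
  cob0 : cob 0 = A;
  cobN : cob n.+1 = Z;
  csq : forall i, (i < n)%N -> acmp (cd i.+1) (cd i) = 0%R }.

Definition eqHom (X Y : aOb C) (e : X = Y) : aHom X Y :=
  match e in _ = Y' return aHom X Y' with erefl => aid X end.

Variables (A Z A' Z' : aOb C).

Definition d0' (X : Cplx A Z) : aHom A (cob X 1) := acmp (cd X 0) (eqHom (esym (cob0 X))).
Definition dn' (X : Cplx A Z) : aHom (cob X n) Z := acmp (eqHom (cobN X)) (cd X n).

Definition chainMap (X : Cplx A Z) (Y : Cplx A' Z') (f : forall i, aHom (cob X i) (cob Y i)) :=
  forall i, (i <= n)%N -> acmp (f i.+1) (cd X i) = acmp (cd Y i) (f i).

Definition end0 (X : Cplx A Z) (Y : Cplx A' Z') (f : forall i, aHom (cob X i) (cob Y i)) :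
  aHom A A' := acmp (eqHom (cob0 Y)) (acmp (f 0) (eqHom (esym (cob0 X)))).
Definition endN (X : Cplx A Z) (Y : Cplx A' Z') (f : forall i, aHom (cob X i) (cob Y i)) :
  aHom Z Z' := acmp (eqHom (cobN Y)) (acmp (f n.+1) (eqHom (esym (cobN X)))).
End Complexes.
Arguments cob {C n A Z}. Arguments cd {C n A Z}. Arguments cob0 {C n A Z}.
Arguments cobN {C n A Z}.
Arguments chainMap {C n A Z A' Z'} X Y f.
Arguments eqHom {C X Y}.

Section Structure.
Variables (C : AddCat) (E : BiAdd C) (n : nat).
Local Notation Cplx := (@Cplx C n).
Local Unset Implicit Arguments.

Definition isCACmor {A Z : aOb C} (X Y : Cplx A Z) (f : forall i, aHom (cob X i) (cob Y i)) :=
  chainMap X Y f /\ end0 f = aid A /\ endN f = aid Z.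

Definition homotopic {A Z : aOb C} {X Y : Cplx A Z} (f g : forall i, aHom (cob X i) (cob Y i)) :=
  exists h : forall i, aHom (cob X i.+1) (cob Y i),
    (g 0 - f 0 = acmp (h 0) (cd X 0))%R /\
    (forall i, (i < n)%N -> (g i.+1 - f i.+1 = acmp (cd Y i) (h i) + acmp (h i.+1) (cd X i.+1))%R) /\
    (g n.+1 - f n.+1 = acmp (cd Y n) (h n))%R.

Definition hequiv {A Z : aOb C} (X Y : Cplx A Z) :=
  exists f g, isCACmor X Y f /\ isCACmor Y X g /\
    homotopic (fun i => acmp (g i) (f i)) (fun i => aid (cob X i)) /\
    homotopic (fun i => acmp (f i) (g i)) (fun i => aid (cob Y i)).

(* a realization: s(delta) = [X]  is encoded as  s delta X *)
Definition Realization := forall Cc A, Ev E Cc A -> Cplx A Cc -> Prop.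

Variable s : Realization.
Local Notation sr := (s _ _).

Definition isClassReal := forall Cc A (d : Ev E Cc A),
  (exists X, sr d X) /\ (forall X Y, sr d X -> (sr d Y <-> hequiv X Y)).

Definition R0 := forall A Cc A' Cc' (d : Ev E Cc A) (d' : Ev E Cc' A')
  (a : aHom A A') (c : aHom Cc Cc'), push E a d = pull E c d' ->
  forall (X : Cplx A Cc) (Y : Cplx A' Cc'), sr d X -> sr d' Y ->
  exists f, chainMap X Y f /\ end0 f = a /\ endN f = c.

Definition nExangle {A Cc : aOb C} (X : Cplx A Cc) (d : Ev E Cc A) :=
  push E (d0' X) d = 0%R /\ pull E (dn' X) d = 0%R /\
  forall W : aOb C,
   (forall i, (i < n)%N -> forall x : aHom W (cob X i.+1), acmp (cd X i.+1) x = 0%R ->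
        exists y : aHom W (cob X i), x = acmp (cd X i) y) /\
   (forall x : aHom W Cc, pull E x d = 0%R -> exists y : aHom W (cob X n), x = acmp (dn' X) y) /\
   (forall x : aHom A W, push E x d = 0%R -> exists y : aHom (cob X 1) W, x = acmp y (d0' X)) /\
   (forall i, (i < n)%N -> forall x : aHom (cob X i.+1) W, acmp x (cd X i) = 0%R ->
        exists y : aHom (cob X i.+2) W, x = acmp y (cd X i.+1)).

Definition R1 := forall Cc A (d : Ev E Cc A) (X : Cplx A Cc), sr d X -> nExangle X d.

Definition R2 :=
  (forall A (X : Cplx A (azero C)), (forall i, (2 <= i <= n.+1)%N -> cob X i = azero C) ->
     (exists e : cob X 1 = A, acmp (eqHom e) (cd X 0) = eqHom (cob0 X)) ->
     sr (0%R : Ev E (azero C) A) X) /\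
  (forall Z (X : Cplx (azero C) Z), (forall i, (i <= n.-1)%N -> cob X i = azero C) ->
     (exists e : cob X n = Z, acmp (eqHom (cobN X)) (cd X n) = eqHom e) ->
     sr (0%R : Ev E Z (azero C)) X).

Definition inflation {A B : aOb C} (f : aHom A B) :=
  exists Cc (d : Ev E Cc A) (X : Cplx A Cc), sr d X /\
    exists e : cob X 1 = B, acmp (eqHom e) (d0' X) = f.
Definition deflation {B Cc : aOb C} (g : aHom B Cc) :=
  exists A (d : Ev E Cc A) (X : Cplx A Cc), sr d X /\
    exists e : cob X n = B, acmp (dn' X) (eqHom (esym e)) = g.

Definition EA1 :=
  (forall A B B' (f : aHom A B) (g : aHom B B'), inflation f -> inflation g -> inflation (acmp g f)) /\
  (forall A B B' (f : aHom A B) (g : aHom B B'), deflation f -> deflation g -> deflation (acmp g f)).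

(* M is the mapping cone M_f of f : X -> Y with f_0 = 1 :
   X_1 -> X_2 (+) Y_1 -> ... -> X_{n+1} (+) Y_n -> Y_{n+1} *)
Definition isConeL {A Cc D : aOb C} (X : Cplx A Cc) (Y : Cplx A D)
  (f : forall i, aHom (cob X i) (cob Y i)) (M : Cplx (cob X 1) D) :=
  exists bp : forall i, (0 < i <= n)%N -> BPdata (cob X i.+1) (cob Y i) (cob M i),
   (forall h : (0 < 1 <= n)%N,
      acmp (bp1 (bp 1 h)) (acmp (cd M 0) (eqHom (esym (cob0 M)))) = (- cd X 1)%R /\
      acmp (bp2 (bp 1 h)) (acmp (cd M 0) (eqHom (esym (cob0 M)))) = f 1) /\
   (forall i (h : (0 < i <= n)%N) (h' : (0 < i.+1 <= n)%N),
      acmp (bp1 (bp i.+1 h')) (acmp (cd M i) (bi1 (bp i h))) = (- cd X i.+1)%R /\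
      acmp (bp1 (bp i.+1 h')) (acmp (cd M i) (bi2 (bp i h))) = 0%R /\
      acmp (bp2 (bp i.+1 h')) (acmp (cd M i) (bi1 (bp i h))) = f i.+1 /\
      acmp (bp2 (bp i.+1 h')) (acmp (cd M i) (bi2 (bp i h))) = cd Y i) /\
   (forall h : (0 < n <= n)%N,
      acmp (eqHom (esym (cobN Y))) (acmp (eqHom (cobN M)) (acmp (cd M n) (bi1 (bp n h)))) = f n.+1 /\
      acmp (eqHom (esym (cobN Y))) (acmp (eqHom (cobN M)) (acmp (cd M n) (bi2 (bp n h)))) = cd Y n).

(* M is the mapping cone M^f of f : X -> Y with f_{n+1} = 1 :
   X_0 -> X_1 (+) Y_0 -> ... -> X_n (+) Y_{n-1} -> Y_n *)
Definition isConeR {A B Cc : aOb C} (X : Cplx A Cc) (Y : Cplx B Cc)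
  (f : forall i, aHom (cob X i) (cob Y i)) (M : Cplx A (cob Y n)) :=
  exists bp : forall j, (j < n)%N -> BPdata (cob X j.+1) (cob Y j) (cob M j.+1),
   (forall h : (0 < n)%N,
      acmp (bp1 (bp 0 h)) (acmp (cd M 0) (eqHom (etrans (cob0 X) (esym (cob0 M))))) = (- cd X 0)%R /\
      acmp (bp2 (bp 0 h)) (acmp (cd M 0) (eqHom (etrans (cob0 X) (esym (cob0 M))))) = f 0) /\
   (forall j (h : (j < n)%N) (h' : (j.+1 < n)%N),
      acmp (bp1 (bp j.+1 h')) (acmp (cd M j.+1) (bi1 (bp j h))) = (- cd X j.+1)%R /\
      acmp (bp1 (bp j.+1 h')) (acmp (cd M j.+1) (bi2 (bp j h))) = 0%R /\
      acmp (bp2 (bp j.+1 h')) (acmp (cd M j.+1) (bi1 (bp j h))) = f j.+1 /\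
      acmp (bp2 (bp j.+1 h')) (acmp (cd M j.+1) (bi2 (bp j h))) = cd Y j) /\
   (forall j (h : (j < n)%N) (e : j.+1 = n),
      let e' : cob M j.+2 = cob Y j.+1 :=
        etrans (f_equal (fun k => cob M k.+1) e) (etrans (cobN M) (f_equal (cob Y) (esym e))) in
      acmp (eqHom e') (acmp (cd M j.+1) (bi1 (bp j h))) = f j.+1 /\
      acmp (eqHom e') (acmp (cd M j.+1) (bi2 (bp j h))) = cd Y j).

Definition EA2 := forall A Cc D (d : Ev E D A) (c : aHom Cc D) (X : Cplx A Cc) (Y : Cplx A D),
  sr (pull E c d) X -> sr d Y ->
  exists f, chainMap X Y f /\ end0 f = aid A /\ endN f = c /\
    exists M : Cplx (cob X 1) D, isConeL X Y f M /\ sr (push E (d0' X) d) M.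

Definition EA2op := forall A B Cc (d : Ev E Cc A) (a : aHom A B) (X : Cplx A Cc) (Y : Cplx B Cc),
  sr d X -> sr (push E a d) Y ->
  exists f, chainMap X Y f /\ end0 f = a /\ endN f = aid Cc /\
    exists M : Cplx A (cob Y n), isConeR X Y f M /\ sr (pull E (dn' Y) d) M.
End Structure.

Record NExCat (n : nat) := {
  xC : AddCat;
  xE : BiAdd xC;
  xs : @Realization xC xE n;
  xcls : @isClassReal xC xE n xs;
  xR0 : @R0 xC xE n xs;
  xR1 : @R1 xC xE n xs;
  xR2 : @R2 xC xE n xs;
  xEA1 : @EA1 xC xE n xs;
  xEA2 : @EA2 xC xE n xs;
  xEA2op : @EA2op xC xE n xs }.
Arguments xC {n}. Arguments xE {n}. Arguments xs {n}.

Record AddFunctor (C D : PreAdd) := {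
  afo : aOb C -> aOb D;
  afm : forall X Y, aHom X Y -> aHom (afo X) (afo Y);
  afid : forall X, afm (aid X) = aid (afo X);
  afcmp : forall X Y Z (g : aHom Y Z) (f : aHom X Y), afm (acmp g f) = acmp (afm g) (afm f);
  afadd : forall X Y (f g : aHom X Y), afm (f + g)%R = (afm f + afm g)%R }.
Arguments afo {C D}. Arguments afm {C D} f {X Y} : rename.

Lemma afm0 (C D : PreAdd) (F : AddFunctor C D) X Y : afm F (0%R : aHom X Y) = 0%R.
Proof.
have h := afadd F (0%R : aHom X Y) 0%R. rewrite GRing.addr0 in h.
have : (afm F 0 + afm F 0 - afm F (0 : aHom X Y) = afm F 0 - afm F 0)%R by rewrite -h.
by rewrite GRing.addrK GRing.subrr.
Qed.

Definition mapCplx (C D : PreAdd) (n : nat) (F : AddFunctor C D) (A Z : aOb C)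
  (X : @Cplx C n A Z) : @Cplx D n (afo F A) (afo F Z).
Proof.
refine {| cob := fun i => afo F (cob X i); cd := fun i => afm F (cd X i);
          cob0 := f_equal (afo F) (cob0 X); cobN := f_equal (afo F) (cobN X) |}.
by move=> i hi; rewrite -afcmp (csq X hi) afm0.
Defined.

Record ExFunctor (n : nat) (X Y : NExCat n) := {
  exF : AddFunctor (xC X) (xC Y);
  exG : forall Cc A, Ev (xE X) Cc A -> Ev (xE Y) (afo exF Cc) (afo exF A);
  exGadd : forall Cc A (x y : Ev (xE X) Cc A), exG (x + y)%R = (exG x + exG y)%R;
  exGpush : forall Cc A B (a : aHom A B) (x : Ev (xE X) Cc A),
      exG (push (xE X) a x) = push (xE Y) (afm exF a) (exG x);
  exGpull : forall Cc D A (c : aHom D Cc) (x : Ev (xE X) Cc A),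
      exG (pull (xE X) c x) = pull (xE Y) (afm exF c) (exG x);
  exGreal : forall Cc A (d : Ev (xE X) Cc A) (Z : @Cplx (xC X) n A Cc),
      xs X _ _ d Z -> xs Y _ _ (exG d) (mapCplx exF Z) }.
Arguments exF {n X Y}. Arguments exG {n X Y} _ {Cc A}.

Record ExNatTrans (n : nat) (X Y : NExCat n) (F G : ExFunctor X Y) := {
  bth : forall Z, aHom (afo (exF F) Z) (afo (exF G) Z);
  bnat : forall Z W (f : aHom Z W), acmp (afm (exF G) f) (bth Z) = acmp (bth W) (afm (exF F) f);
  bex : forall Cc A (d : Ev (xE X) Cc A),
      push (xE Y) (bth A) (exG F d) = pull (xE Y) (bth Cc) (exG G d) }.
Arguments bth {n X Y F G}.

Definition toCat (C : PreAdd) : Cat :=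
  @Build_Cat (aOb C) (fun X Y => (aHom X Y : Type)) (@aid C) (@acmp C)
    (fun W X Y Z h g f => (acmpA h g f)) (fun X Y f => (acmp1l f))
    (fun X Y f => (acmp1r f)).

Definition toBiF (C : PreAdd) (E : BiAdd C) : BiF (toCat C) :=
  @Build_BiF (toCat C) (fun Cc A => (Ev E Cc A : Type)) (@push C E) (@pull C E)
    (fun _ _ x => (push_id x)) (fun _ _ x => (pull_id x))
    (fun _ _ _ _ b a x => (push_cmp b a x)) (fun _ _ _ _ c d x => (pull_cmp c d x))
    (fun _ _ _ _ a c x => (push_pull a c x)).

Definition toFun (C D : PreAdd) (F : AddFunctor C D) : Functor (toCat C) (toCat D) :=
  @Build_Functor (toCat C) (toCat D) (afo F) (@afm C D F)
    (fun X => (afid F X)) (fun _ _ _ g f => (afcmp F g f)).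

Definition exMor (n : nat) (X Y : NExCat n) (F : ExFunctor X Y) :
  BiFMor (toBiF (xE X)) (toBiF (xE Y)) :=
  @Build_BiFMor (toCat (xC X)) (toCat (xC Y)) (toBiF (xE X)) (toBiF (xE Y))
    (toFun (exF F)) (@exG n X Y F)
    (fun _ _ _ a x => (exGpush F a x)) (fun _ _ _ c x => (exGpull F c x)).

Definition bNT (n : nat) (X Y : NExCat n) (F G : ExFunctor X Y) (b : ExNatTrans F G) :
  NatTrans (toFun (exF F)) (toFun (exF G)) :=
  @Build_NatTrans (toCat (xC X)) (toCat (xC Y)) (toFun (exF F)) (toFun (exF G)) (bth b).

Definition bracket (n : nat) (X Y : NExCat n) (F G : ExFunctor X Y) (b : ExNatTrans F G) :
  NatTrans (ExtFun (exMor F)) (ExtFun (exMor G)) :=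
  @genBracket _ _ _ _ (exMor F) (exMor G) (bNT b) (fun _ _ x => (bex b x)).

Lemma tilde_bracket_pf (n : nat) (X Y : NExCat n) (F G : ExFunctor X Y) (b : ExNatTrans F G)
  (P Q : TOb (toCat (xC X))) (x : TEv (toBiF (xE X)) P Q) :
  (tpush (ntc (tildeNT (bNT b)) Q) (tildeBg (exMor F) x) =
      tpull (ntc (tildeNT (bNT b)) P) (tildeBg (exMor G) x)).
Proof.
have [x1 x2] := tevpf x. apply: TEv_eq => /=.
have y1 : push (xE X) (tid Q) (tev x) = tev x := x1.
have y2 : pull (xE X) (tid P) (tev x) = tev x := x2.
rewrite !push_cmp !pull_cmp -exGpush y1 (bex b) push_pull -exGpush y1.
rewrite -exGpull y2 -(bex b) -push_pull -exGpull y2 (bex b).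
done.
Qed.

Definition tildeBracket (n : nat) (X Y : NExCat n) (F G : ExFunctor X Y) (b : ExNatTrans F G) :
  NatTrans (ExtFun (tildeMor (exMor F))) (ExtFun (tildeMor (exMor G))) :=
  @genBracket _ _ _ _ (tildeMor (exMor F)) (tildeMor (exMor G)) (tildeNT (bNT b))
    (@tilde_bracket_pf n X Y F G b).

Definition ShinX (n : nat) (X : NExCat n) := Shin (toBiF (xE X)).

(* a morphism of the idempotent completion written as the triple (e_Y, f, e_X) *)
Definition triple (K : Cat) (P Q : TOb K) (f : THom P Q) :
  Hom (tob Q) (tob Q) * Hom (tob P) (tob Q) * Hom (tob P) (tob P) :=
  (tid Q, tmor f, tid P).

From mathcomp Require Import all_boot.

(* At an object (e_A, α, e_C), the left side has components
   (tilde ב)_{(A,e_A)} ∘ F e_A (and likewise at C), the right side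
   G e_A ∘ (tilde ב)_{(A,e_A)}.  A component of tilde ב is a morphism of the
   idempotent completion, so it absorbs the idempotents on both sides and
   the two composites agree. *)

Lemma tildeNT_absorb (K L : Cat) (H M : Functor K L) (t : NatTrans H M) (P : TOb K) :
  cmp (tmor (ntc (tildeNT t) P)) (fmor H (tid P)) =
  cmp (fmor M (tid P)) (tmor (ntc (tildeNT t) P)).
Proof. by have [-> ->] := tcond (ntc (tildeNT t) P). Qed.

Lemma hcomp_tildeBracket_Shin (K L : Cat) (E : BiF K) (E' : BiF L) (M1 M2 : BiFMor E E')
  (t : NatTrans (bH M1) (bH M2))
  (pf : forall C A (x : gEv E C A),
          gpush E' (ntc t A) (bg M1 x) = gpull E' (ntc t C) (bg M2 x))
  (tpf : forall P Q (x : TEv E P Q),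
          tpush (ntc (tildeNT t) Q) (tildeBg M1 x) = tpull (ntc (tildeNT t) P) (tildeBg M2 x))
  (X : ExtOb (tildeBiF E)) :
  triple (ntc (hcomp (tildeNT (@genBracket _ _ _ _ M1 M2 t pf)) (idNT (Shin E))) X) =
  triple (ntc (hcomp (idNT (Shin E'))
                     (@genBracket _ _ _ _ (tildeMor M1) (tildeMor M2) (tildeNT t) tpf)) X).
Proof. by congr (_, _, _); apply: ExtHom_eq => //=; apply: tildeNT_absorb. Qed.

Theorem proposition5p3 (n : nat) (hn : (1 <= n)%N) (C D : NExCat n)
  (F G : ExFunctor C D) (b : ExNatTrans F G) :
  forall X : Ob (ExtCat (tildeBiF (toBiF (xE C)))),
  triple (ntc (hcomp (tildeNT (bracket b)) (idNT (Shin (toBiF (xE C))))) X) =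
  triple (ntc (hcomp (idNT (Shin (toBiF (xE D)))) (tildeBracket b)) X).
Proof. exact: hcomp_tildeBracket_Shin. Qed.
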